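(* Let $0<q<1$, $p=1-q$, $Q=1/q$, $L=\log Q$. The expected position of the last left-to-right maximum in a random word of length $n$ satisfies, as $n\to\infty$, \[ \mathbb E[P_n]=n\Big(\frac1L-\frac qp+\varpi(\log_Q n)\Big)+o(n), \] where $\varpi$ is a continuous periodic function of period $1$ (arising from the poles $z=1+2k\pi i/L$, $k\in\mathbb Z\setminus\{0\}$).
   Context: Words $a_1\dots a_n$ have independent letters with $\mathbb P\{a_i=k\}=pq^{k-1}$, $k\ge1$. An index $i$ is a left-to-right maximum if $a_i>a_j$ for all $j<i$. $P_n$ is the index of the last left-to-right maximum, i.e. of the first occurrence of $\max_j a_j$. *)

From Stdlib Require Import Reals Lra List Arith.
From Coquelicot Require Import Coquelicot.
Import ListNotations.
Open Scope R_scope.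

Fixpoint words (n M : nat) : list (list nat) :=
  match n with
  | O => [ [] ]
  | S n' => flat_map (fun a => map (cons a) (words n' M)) (seq 1 M)
  end.

Definition word_prob (p q : R) (w : list nat) : R :=
  fold_right (fun a acc => p * q ^ (a - 1) * acc) 1 w.

(* Scanning left to right: i = current (1-based) index, m = current running
   maximum, pos = index of the last left-to-right maximum seen so far.
   Index i is a left-to-right maximum iff a_i > a_j for all j < i,
   i.e. iff a_i > (running max of a_1..a_{i-1}) (with max of empty = 0,
   letters being >= 1). *)
Fixpoint last_lrmax_aux (w : list nat) (i m pos : nat) : nat :=
  match w with
  | [] => pos
  | a :: w' =>
      if Nat.ltb m a then last_lrmax_aux w' (S i) a i
      else last_lrmax_aux w' (S i) m pos
  end.

Definition last_lrmax (w : list nat) : nat := last_lrmax_aux w 1 0 0.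

Definition partial_EP (p q : R) (n M : nat) : R :=
  fold_right Rplus 0
    (map (fun w => word_prob p q w * INR (last_lrmax w)) (words n M)).

(* E[P_n] = sum over all words in {1,2,...}^n of P(w) P_n(w): a series of
   nonnegative terms, obtained as the (monotone) limit of the partial sums
   over letters bounded by M. *)
Definition EP (p q : R) (n : nat) : R :=
  real (Lim_seq (fun M => partial_EP p q n M)).

From Stdlib Require Import Reals Lra Lia List.
From Coquelicot Require Import Coquelicot.
Open Scope R_scope.

(* Sort the words by their largest letter k and put x = q^k.  The expected index
   of the first occurrence of k, on the event that k is the maximum, is an explicit
   combination of (1 - x)^n and (1 - Q x)^n; divided by n it differs from h(n x), where
     h(t) = (e^{-t} - e^{-Q t}) / (c t) - e^{-Q t},   c = p/q = Q - 1,
   by O(1/n) times the increment of a bounded potential that telescopes in k.  Hence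
   E[P_n]/n = F(n) + O(1/n) for the bilateral sum F(x) = sum_{k in Z} h(x q^k), which is
   continuous with F(Q x) = F(x), and varpi(u) = F(Q^u) - (1/L - q/p) is 1-periodic.
   Its mean vanishes because h(t) = -t D'(t) - (e^{-t} - e^{-Q t})/c with
   D(t) = (e^{-t} - e^{-Q t})/(c t): over one period the bilateral sum of the first part
   telescopes to (D(0+) - D(+oo))/L = 1/L, that of the second to 1/c = q/p. *)

Definition lsum (f : nat -> R) (l : list nat) : R := fold_right Rplus 0 (map f l).

Lemma lsum_cons f a l : lsum f (a :: l) = f a + lsum f l.
Proof. reflexivity. Qed.

Lemma lsum_app f l1 l2 : lsum f (l1 ++ l2) = lsum f l1 + lsum f l2.
Proof. induction l1 as [|a l1 IH]; [unfold lsum; simpl; ring|]. simpl app. rewrite !lsum_cons, IH; ring. Qed.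

Lemma lsum_ext_in f g l : (forall x, In x l -> f x = g x) -> lsum f l = lsum g l.
Proof. intros H; unfold lsum; f_equal; apply map_ext_in; auto. Qed.

Lemma lsum_ext f g l : (forall x, f x = g x) -> lsum f l = lsum g l.
Proof. intros H; apply lsum_ext_in; auto. Qed.

Lemma lsum_plus f g l : lsum (fun x => f x + g x) l = lsum f l + lsum g l.
Proof. induction l; [unfold lsum; simpl; ring|]. rewrite !lsum_cons, IHl; ring. Qed.

Lemma lsum_minus f g l : lsum (fun x => f x - g x) l = lsum f l - lsum g l.
Proof. induction l; [unfold lsum; simpl; ring|]. rewrite !lsum_cons, IHl; ring. Qed.

Lemma lsum_scal c f l : lsum (fun x => c * f x) l = c * lsum f l.
Proof. induction l; [unfold lsum; simpl; ring|]. rewrite !lsum_cons, IHl; ring. Qed.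

Lemma lsum_le_in f g l : (forall x, In x l -> f x <= g x) -> lsum f l <= lsum g l.
Proof.
  induction l as [|a l IH]; intros H; [unfold lsum; simpl; lra|]. rewrite !lsum_cons.
  apply Rplus_le_compat; [apply H; left; auto|apply IH; intros; apply H; right; auto].
Qed.

Lemma lsum_le f g l : (forall x, f x <= g x) -> lsum f l <= lsum g l.
Proof. intros H; apply lsum_le_in; auto. Qed.

Lemma lsum_abs f l : Rabs (lsum f l) <= lsum (fun x => Rabs (f x)) l.
Proof.
  induction l; [unfold lsum; simpl; rewrite Rabs_R0; lra|]. rewrite !lsum_cons.
  eapply Rle_trans; [apply Rabs_triang|]. lra.
Qed.

Lemma lsum_seq_S f s n : lsum f (seq s (S n)) = lsum f (seq s n) + f (s + n)%nat.
Proof. rewrite seq_S, lsum_app. unfold lsum at 2; simpl; ring. Qed.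

Lemma lsum_telescope u s n : lsum (fun k => u (S k) - u k) (seq s n) = u (s + n)%nat - u s.
Proof.
  induction n. { unfold lsum; simpl; rewrite Nat.add_0_r; ring. }
  rewrite lsum_seq_S, IHn, Nat.add_succ_r; ring.
Qed.

Lemma sum_flat_map_cons (g : list nat -> R) (W : list (list nat)) (l : list nat) :
  fold_right Rplus 0 (map g (flat_map (fun a => map (cons a) W) l)) =
  lsum (fun a => fold_right Rplus 0 (map (fun w => g (a :: w)) W)) l.
Proof.
  induction l as [|a l IH]; [reflexivity|]. cbn [flat_map].
  rewrite map_app, fold_right_app, lsum_cons, <- IH, map_map.
  generalize (fold_right Rplus 0 (map g (flat_map (fun a0 => map (cons a0) W) l))).
  clear IH. induction W; intros r; simpl; [ring|]. rewrite IHW; ring.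
Qed.

Lemma sum_map_scal (c : R) (g : list nat -> R) (W : list (list nat)) :
  fold_right Rplus 0 (map (fun w => c * g w) W) = c * fold_right Rplus 0 (map g W).
Proof. induction W; simpl; [ring|]. rewrite IHW; ring. Qed.

Lemma pow_le_one x n : 0 <= x <= 1 -> x ^ n <= 1.
Proof. intros H. induction n; simpl; [lra|]. assert (0 <= x ^ n) by (apply pow_le; lra). nra. Qed.

(** * Exact expectation for letters bounded by M *)

Section Words.
Variables (q : R) (M : nat).

Definition letter_prob (k : nat) := (1 - q) * q ^ (k - 1).
Definition prob_below (k : nat) := 1 - q ^ (k - 1).
Definition prob_atmost (k : nat) := 1 - q ^ k.

(* [max_first_pos n i k]: over the remaining [n] letters, read from index [i]
   on, the expected index of the first occurrence of [k], restricted to the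
   event that [k] is their maximum. *)
Fixpoint max_first_pos (n i k : nat) : R :=
  match n with
  | O => 0
  | S n' => INR i * letter_prob k * prob_atmost k ^ n' + prob_below k * max_first_pos n' (S i) k
  end.

Definition lrmax_expect (n i m pos : nat) : R :=
  fold_right Rplus 0
    (map (fun w => word_prob (1 - q) q w * INR (last_lrmax_aux w i m pos)) (words n M)).

Lemma lsum_letter_prob m : lsum letter_prob (seq 1 m) = 1 - q ^ m.
Proof.
  induction m. { unfold lsum; simpl; ring. }
  rewrite lsum_seq_S, IHm. unfold letter_prob.
  replace (1 + m - 1)%nat with m by lia. simpl; ring.
Qed.

(* [prob_below k] splits as [P(letter <= m)] plus the [letter_prob a], [m < a < k]. *)
Lemma lsum_prob_below_split (f : nat -> R) len : forall m,
  (1 - q ^ m) * lsum f (seq (S m) len) +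
  lsum (fun a => letter_prob a * lsum f (seq (S a) (m + len - a))) (seq (S m) len) =
  lsum (fun k => prob_below k * f k) (seq (S m) len).
Proof.
  induction len; intros m. { unfold lsum; simpl; ring. }
  simpl seq. rewrite !lsum_cons.
  replace (m + S len - S m)%nat with len by lia.
  rewrite <- (IHlen (S m)).
  rewrite (lsum_ext_in (fun a => letter_prob a * lsum f (seq (S a) (m + S len - a)))
                       (fun a => letter_prob a * lsum f (seq (S a) (S m + len - a)))).
  2:{ intros x _. do 3 f_equal. lia. }
  unfold letter_prob, prob_below. replace (S m - 1)%nat with m by lia. simpl. ring.
Qed.

Lemma lrmax_expect_S n i m pos :
  lrmax_expect (S n) i m pos =
  lsum (fun a => letter_prob a * lrmax_expect n (S i) (if Nat.ltb m a then a else m)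
                                                      (if Nat.ltb m a then i else pos)) (seq 1 M).
Proof.
  unfold lrmax_expect. simpl words. rewrite sum_flat_map_cons. apply lsum_ext. intros a.
  rewrite <- sum_map_scal. f_equal. apply map_ext. intros w.
  simpl. unfold letter_prob. destruct (Nat.ltb m a); ring.
Qed.

Lemma lrmax_expect_closed n : forall i m pos, (m <= M)%nat ->
  lrmax_expect n i m pos = INR pos * (1 - q ^ m) ^ n + lsum (max_first_pos n i) (seq (S m) (M - m)).
Proof.
  induction n; intros i m pos Hm.
  { unfold lrmax_expect. cbn [words map fold_right word_prob last_lrmax_aux].
    rewrite (lsum_ext (max_first_pos 0 i) (fun _ => 0 * 0)) by (intros; simpl; ring).
    rewrite lsum_scal. simpl; ring. }
  rewrite lrmax_expect_S.
  replace (seq 1 M) with (seq 1 m ++ seq (S m) (M - m)) by (rewrite <- seq_app; f_equal; lia).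
  rewrite lsum_app.
  rewrite (lsum_ext_in _ (fun a => lrmax_expect n (S i) m pos * letter_prob a) (seq 1 m)).
  2:{ intros x Hx. apply in_seq in Hx.
      replace (Nat.ltb m x) with false by (symmetry; apply Nat.ltb_ge; lia). ring. }
  rewrite (lsum_ext_in _ (fun a => INR i * letter_prob a * prob_atmost a ^ n
                                   + letter_prob a * lsum (max_first_pos n (S i)) (seq (S a) (M - a)))
             (seq (S m) (M - m))).
  2:{ intros x Hx. apply in_seq in Hx.
      replace (Nat.ltb m x) with true by (symmetry; apply Nat.ltb_lt; lia).
      rewrite IHn by lia. unfold prob_atmost. ring. }
  rewrite lsum_scal, lsum_letter_prob, IHn by lia.
  rewrite lsum_plus. simpl max_first_pos. rewrite lsum_plus.
  pose proof (lsum_prob_below_split (max_first_pos n (S i)) (M - m) m) as K.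
  replace (m + (M - m))%nat with M in K by lia.
  rewrite <- K. simpl pow. ring.
Qed.

Lemma partial_EP_closed n : partial_EP (1 - q) q n M = lsum (max_first_pos n 1) (seq 1 M).
Proof.
  change (partial_EP (1 - q) q n M) with (lrmax_expect n 1 0 0).
  rewrite lrmax_expect_closed by lia. rewrite Nat.sub_0_r. simpl INR. ring.
Qed.

Lemma max_first_pos_closed k : (1 <= k)%nat -> forall n i,
  max_first_pos n i k * letter_prob k =
    (INR i - 1) * letter_prob k * (prob_atmost k ^ n - prob_below k ^ n)
    + prob_atmost k * (prob_atmost k ^ n - prob_below k ^ n)
    - INR n * prob_below k ^ n * letter_prob k.
Proof.
  intros Hk.
  assert (Hw : letter_prob k = prob_atmost k - prob_below k).
  { unfold letter_prob, prob_atmost, prob_below. destruct k; [lia|].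
    replace (S k - 1)%nat with k by lia. simpl; ring. }
  rewrite Hw. induction n; intros i; [simpl; ring|].
  cbn [max_first_pos]. rewrite Hw.
  transitivity (INR i * (prob_atmost k - prob_below k) * prob_atmost k ^ n * (prob_atmost k - prob_below k)
    + prob_below k * (max_first_pos n (S i) k * (prob_atmost k - prob_below k))); [ring|].
  rewrite IHn, !S_INR. simpl pow. ring.
Qed.

Lemma max_first_pos_nonneg n i k : 0 <= q <= 1 -> (1 <= k)%nat -> 0 <= max_first_pos n i k.
Proof.
  intros Hq Hk. revert i; induction n; intros i; simpl; [lra|].
  assert (0 <= q ^ (k - 1) <= 1) by (split; [apply pow_le| apply pow_le_one]; lra).
  assert (0 <= q ^ k <= 1) by (split; [apply pow_le| apply pow_le_one]; lra).
  pose proof (pos_INR i).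
  apply Rplus_le_le_0_compat; [|apply Rmult_le_pos; [unfold prob_below; lra| apply IHn]].
  apply Rmult_le_pos; [apply Rmult_le_pos; [lra| unfold letter_prob; apply Rmult_le_pos; lra]|].
  apply pow_le; unfold prob_atmost; lra.
Qed.

End Words.

Lemma exp_le x y : x <= y -> exp x <= exp y.
Proof. intros [H|H]; [left; apply exp_increasing; auto| subst; lra]. Qed.

Lemma exp_mult_INR n x : exp (INR n * x) = exp x ^ n.
Proof.
  induction n. { simpl. rewrite Rmult_0_l, exp_0; ring. }
  rewrite S_INR, Rmult_plus_distr_r, Rmult_1_l, exp_plus, IHn. simpl; ring.
Qed.

Lemma exp_opp_ge y : 1 - y <= exp (- y).
Proof. pose proof (exp_ineq1_le (- y)); lra. Qed.

Lemma exp_opp_le_inv y : 0 <= y -> exp (- y) <= / (1 + y).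
Proof. intros Hy. rewrite exp_Ropp. apply Rinv_le_contravar; [lra|]. apply exp_ineq1_le. Qed.

Lemma exp_opp_le_quadratic y : 0 <= y -> exp (- y) <= 1 - y + y ^ 2.
Proof.
  intros Hy. eapply Rle_trans; [apply exp_opp_le_inv; auto|].
  apply (Rmult_le_reg_l (1 + y)); [lra|]. rewrite Rinv_r by lra. nra.
Qed.

Lemma exp_opp_le_inv_id y : 0 < y -> exp (- y) <= / y.
Proof. intros Hy. eapply Rle_trans; [apply exp_opp_le_inv; lra|]. apply Rinv_le_contravar; lra. Qed.

Lemma exp_opp_le_1 y : 0 <= y -> exp (- y) <= 1.
Proof. intros Hy. rewrite <- exp_0. apply exp_le. lra. Qed.

Lemma pow_sub_pow_le a b n : 0 <= b <= a -> 0 <= a ^ S n - b ^ S n <= INR (S n) * (a - b) * a ^ n.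
Proof.
  intros [Hb Hab]. induction n as [|n [IH0 IH]]; [simpl; lra|].
  assert (0 <= b ^ S n) by (apply pow_le; lra).
  assert (b ^ S n <= a ^ S n) by (apply pow_incr; lra).
  assert (0 <= a ^ n) by (apply pow_le; lra).
  replace (a ^ S (S n) - b ^ S (S n)) with (a * (a ^ S n - b ^ S n) + b ^ S n * (a - b)) by (simpl; ring).
  assert (a * (a ^ S n - b ^ S n) <= a * (INR (S n) * (a - b) * a ^ n)) by (apply Rmult_le_compat_l; lra).
  assert (b ^ S n * (a - b) <= a ^ S n * (a - b)) by (apply Rmult_le_compat_r; lra).
  rewrite S_INR. split; [apply Rplus_le_le_0_compat; apply Rmult_le_pos; lra|].
  replace ((INR (S n) + 1) * (a - b) * a ^ S n)
    with (a * (INR (S n) * (a - b) * a ^ n) + a ^ S n * (a - b)) by (simpl; ring).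
  lra.
Qed.

(* Compare termwise (1 - y)^n with (e^{-y})^n, using 0 <= e^{-y} - (1 - y) <= y^2
   and e^{-y} >= 1/3. *)
Lemma pow_exp_approx y n : 0 <= y <= 1 ->
  Rabs ((1 - y) ^ n - exp (- (INR n * y))) <= 3 * INR n * y ^ 2 * exp (- (INR n * y)).
Proof.
  intros Hy. destruct n as [|n].
  { simpl. rewrite Rmult_0_l, Ropp_0, exp_0, Rminus_diag, Rabs_R0. lra. }
  set (a := exp (- y)). set (b := 1 - y).
  assert (Hb : 0 <= b <= a) by (unfold a, b; split; [lra| apply exp_opp_ge]).
  assert (Hab : a - b <= y ^ 2) by (unfold a, b; pose proof (exp_opp_le_quadratic y); lra).
  assert (E : exp (- (INR (S n) * y)) = a ^ S n) by (unfold a; rewrite <- exp_mult_INR; f_equal; ring).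
  rewrite E. fold b.
  destruct (pow_sub_pow_le a b n Hb) as [H1 H2].
  rewrite Rabs_minus_sym, Rabs_right by lra.
  assert (Ha3 : 1 <= 3 * a).
  { unfold a. rewrite exp_Ropp. apply (Rmult_le_reg_r (exp y)); [apply exp_pos|].
    rewrite Rmult_assoc, Rinv_l by (apply Rgt_not_eq, exp_pos).
    assert (exp y <= exp 1) by (apply exp_le; lra). pose proof exp_le_3; lra. }
  assert (0 <= a ^ n) by (apply pow_le; lra).
  pose proof (pos_INR (S n)).
  apply Rle_trans with (INR (S n) * y ^ 2 * a ^ n).
  { eapply Rle_trans; [exact H2|]. apply Rmult_le_compat_r; auto. apply Rmult_le_compat_l; lra. }
  replace (3 * INR (S n) * y ^ 2 * a ^ S n) with (INR (S n) * y ^ 2 * a ^ n * (3 * a)) by (simpl; ring).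
  rewrite <- (Rmult_1_r (INR (S n) * y ^ 2 * a ^ n)) at 1.
  apply Rmult_le_compat_l; auto. apply Rmult_le_pos; auto. apply Rmult_le_pos; auto. apply pow2_ge_0.
Qed.

Lemma is_lim_seq_of_abs_le (u v : nat -> R) (l : R) :
  (forall n, Rabs (u n - l) <= v n) -> is_lim_seq v 0 -> is_lim_seq u l.
Proof.
  intros H Hv. apply is_lim_seq_le_le with (fun n => l - v n) (fun n => l + v n).
  - intros n. specialize (H n). apply Rabs_le_between' in H. lra.
  - replace (Finite l) with (Finite (l - 0)) by (f_equal; ring).
    apply is_lim_seq_minus'; auto. apply is_lim_seq_const.
  - replace (Finite l) with (Finite (l + 0)) by (f_equal; ring).
    apply is_lim_seq_plus'; auto. apply is_lim_seq_const.
Qed.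

Lemma is_lim_seq_scal_geom c r : 0 <= r < 1 -> is_lim_seq (fun j => c * r ^ j) 0.
Proof.
  intros Hr. replace (Finite 0) with (Finite (c * 0)) by (f_equal; ring).
  apply is_lim_seq_mult'; [apply is_lim_seq_const|].
  apply is_lim_seq_geom. rewrite Rabs_right; lra.
Qed.

Lemma is_lim_seq_div_INR_S c : is_lim_seq (fun n => c / INR (S n)) 0.
Proof.
  replace (Finite 0) with (Finite (c * 0)) by (f_equal; ring).
  apply is_lim_seq_mult'; [apply is_lim_seq_const|].
  pose proof (is_lim_seq_inv _ _ (proj1 (is_lim_seq_incr_1 INR p_infty) is_lim_seq_INR)) as H.
  apply H. discriminate.
Qed.

Lemma series_telescoping_bound (a w : nat -> R) (l : R) :
  (forall j, Rabs (a j) <= w j - w (S j)) -> is_lim_seq w l ->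
  exists s : R, is_lim_seq (fun N => lsum a (seq 0 N)) s /\
            forall N, Rabs (s - lsum a (seq 0 N)) <= w N - l.
Proof.
  intros Ha Hw.
  assert (Hl : forall j, l <= w j).
  { apply is_lim_seq_decr_compare; auto.
    intros j. specialize (Ha j). pose proof (Rabs_pos (a j)). lra. }
  assert (Htel : forall s m, lsum (fun j => w j - w (S j)) (seq s m) = w s - w (s + m)%nat).
  { intros s m. rewrite (lsum_ext _ (fun j => -1 * (w (S j) - w j))) by (intros; ring).
    rewrite lsum_scal, lsum_telescope. ring. }
  (* [b] is nonnegative with bounded partial sums, hence summable by monotonicity *)
  set (b := fun j => (w j - w (S j)) - a j).
  assert (Hsplit : forall m, lsum a (seq 0 m) = (w 0%nat - w m) - lsum b (seq 0 m)).
  { intros m. change (w m) with (w (0 + m)%nat). rewrite <- (Htel 0%nat m), <- lsum_minus.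
    apply lsum_ext. intros j; unfold b; ring. }
  destruct (ex_finite_lim_seq_incr (fun N => lsum b (seq 0 N)) (2 * (w 0%nat - l))) as [sB HB].
  { intros N. rewrite lsum_seq_S. unfold b. specialize (Ha (0 + N)%nat).
    pose proof (Rle_abs (a (0 + N)%nat)). lra. }
  { intros N. apply Rle_trans with (lsum (fun j => 2 * (w j - w (S j))) (seq 0 N)).
    - apply lsum_le. intros j. unfold b. specialize (Ha j).
      pose proof (Rle_abs (- a j)). rewrite Rabs_Ropp in H. lra.
    - rewrite lsum_scal, Htel. specialize (Hl (0 + N)%nat). lra. }
  assert (Hs : is_lim_seq (fun m => lsum a (seq 0 m)) (w 0%nat - l - sB)).
  { apply (is_lim_seq_ext (fun m => (w 0%nat - w m) - lsum b (seq 0 m)));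
      [intros m; symmetry; apply Hsplit|].
    apply is_lim_seq_minus'; auto. apply is_lim_seq_minus'; auto. apply is_lim_seq_const. }
  exists (w 0%nat - l - sB). split; auto.
  intros N.
  assert (HsN : is_lim_seq (fun m => lsum a (seq N m)) (w 0%nat - l - sB - lsum a (seq 0 N))).
  { apply (is_lim_seq_ext (fun m => lsum a (seq 0 (m + N)) - lsum a (seq 0 N))).
    - intros m. rewrite Nat.add_comm, seq_app, lsum_app. simpl; ring.
    - apply is_lim_seq_minus'; [|apply is_lim_seq_const].
      now apply (is_lim_seq_incr_n (fun m => lsum a (seq 0 m)) N). }
  assert (HwN : is_lim_seq (fun m => w N - w (N + m)%nat) (w N - l)).
  { apply is_lim_seq_minus'; [apply is_lim_seq_const|].
    apply (is_lim_seq_ext (fun m => w (m + N)%nat)); [intros; f_equal; lia|].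
    now apply (is_lim_seq_incr_n w N). }
  change (Rbar_le (Rabs (w 0%nat - l - sB - lsum a (seq 0 N))) (w N - l)).
  apply (is_lim_seq_le (fun m => Rabs (lsum a (seq N m))) (fun m => w N - w (N + m)%nat));
    [| apply (is_lim_seq_abs _ (w 0%nat - l - sB - lsum a (seq 0 N))); auto| auto].
  intros m. rewrite <- Htel. eapply Rle_trans; [apply lsum_abs| apply lsum_le; auto].
Qed.


Lemma is_derive_lsum (f df : nat -> R -> R) l x :
  (forall j, is_derive (f j) x (df j x)) ->
  is_derive (fun y => lsum (fun j => f j y) l) x (lsum (fun j => df j x) l).
Proof.
  intros H. induction l.
  - apply (is_derive_ext (fun _ => 0)); [reflexivity|].
    exact (is_derive_const (K := R_AbsRing) (0:R) x).
  - apply (is_derive_plus (f a) (fun y => lsum (fun j => f j y) l)); auto.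
Qed.

Lemma continuous_of_uniform_approx (F : R -> R) (f : nat -> R -> R) (e : nat -> R) x0 d :
  0 < d -> (forall N, continuous (f N) x0) ->
  (forall N x, Rabs (x - x0) < d -> Rabs (F x - f N x) <= e N) -> is_lim_seq e 0 ->
  continuous F x0.
Proof.
  intros Hd Hf Hb He. apply filterlim_locally. intros eps.
  assert (He3 : 0 < eps / 3) by (pose proof (cond_pos eps); lra).
  destruct (proj2 (is_lim_seq_spec e 0) He (mkposreal _ He3)) as [N HN].
  specialize (HN N (le_n _)). simpl in HN. rewrite Rminus_0_r in HN.
  eapply filter_imp;
    [|apply filter_and; [exact (proj1 (filterlim_locally _ _) (Hf N) (mkposreal _ He3))
                        | exact (locally_ball x0 (mkposreal _ Hd))]].
  intros x [H1 H2]. change (Rabs (f N x - f N x0) < eps / 3) in H1.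
  change (Rabs (x - x0) < d) in H2. change (Rabs (F x - F x0) < eps).
  assert (T1 := Hb N x H2).
  assert (T2 := Hb N x0 ltac:(rewrite Rminus_diag, Rabs_R0; lra)).
  pose proof (Rle_abs (e N)).
  replace (F x - F x0) with ((F x - f N x) + (f N x - f N x0) - (F x0 - f N x0)) by ring.
  eapply Rle_lt_trans; [apply Rabs_triang|]. rewrite Rabs_Ropp.
  eapply Rle_lt_trans; [apply Rplus_le_compat_r; apply Rabs_triang|]. lra.
Qed.

Lemma RInt_dist_le (f g : R -> R) a b c : a <= b ->
  (forall x, a <= x <= b -> continuous f x) -> (forall x, a <= x <= b -> continuous g x) ->
  (forall x, a <= x <= b -> Rabs (f x - g x) <= c) ->
  Rabs (RInt f a b - RInt g a b) <= (b - a) * c.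
Proof.
  intros Hab Hf Hg Hfg.
  assert (Hexf : ex_RInt f a b).
  { apply (ex_RInt_continuous (V := R_CompleteNormedModule)).
    intros z Hz. apply Hf. rewrite Rmin_left, Rmax_right in Hz; auto. }
  assert (Hexg : ex_RInt g a b).
  { apply (ex_RInt_continuous (V := R_CompleteNormedModule)).
    intros z Hz. apply Hg. rewrite Rmin_left, Rmax_right in Hz; auto. }
  assert (E := RInt_minus f g a b Hexf Hexg). change minus with Rminus in E.
  rewrite <- E. apply abs_RInt_le_const; auto.
  apply (ex_RInt_minus (V := R_NormedModule)); auto.
Qed.

Lemma continuous_lsum (f : nat -> R -> R) l x :
  (forall j, continuous (f j) x) -> continuous (fun y => lsum (fun j => f j y) l) x.
Proof.
  intros H. induction l as [|a l IH].
  - exact (continuous_const (U := R_UniformSpace) (0 : R) x).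
  - exact (continuous_plus (V := R_NormedModule) (f a) (fun y => lsum (fun j => f j y) l) x (H a) IH).
Qed.

Lemma is_RInt_lincomb (f g : R -> R) a b If Ig k1 k2 :
  is_RInt f a b If -> is_RInt g a b Ig -> is_RInt (fun x => k1 * f x - k2 * g x) a b (k1 * If - k2 * Ig).
Proof.
  intros Hf Hg.
  exact (is_RInt_minus _ _ _ _ _ _ (is_RInt_scal _ _ _ k1 _ Hf) (is_RInt_scal _ _ _ k2 _ Hg)).
Qed.

(** * The limit profile of a level *)

Section Asymptotics.
Variable q : R.
Hypothesis hq0 : 0 < q.
Hypothesis hq1 : q < 1.

Definition Q := 1 / q.
Definition pq := (1 - q) / q.

Lemma Q_gt_1 : 1 < Q.
Proof. unfold Q. apply (Rmult_lt_reg_r q); auto. field_simplify; lra. Qed.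

Lemma pq_pos : 0 < pq.
Proof. unfold pq. apply Rdiv_lt_0_compat; lra. Qed.

Lemma Q_eq : Q = 1 + pq.
Proof. unfold Q, pq. field. lra. Qed.

Lemma q_mul_Q : q * Q = 1.
Proof. unfold Q. field. lra. Qed.

Lemma Q_pow j : Q ^ j = / q ^ j.
Proof. unfold Q. rewrite <- pow_inv. f_equal. field. lra. Qed.

Lemma Q_pow_pos j : 0 < Q ^ j.
Proof. apply pow_lt. pose proof Q_gt_1. lra. Qed.

Lemma Q_mul_pow k : (1 <= k)%nat -> Q * q ^ k = q ^ (k - 1).
Proof.
  intros Hk. destruct k; [lia|]. replace (S k - 1)%nat with k by lia. simpl.
  rewrite <- Rmult_assoc, (Rmult_comm Q), q_mul_Q; ring.
Qed.

Definition exp_gap t := exp (- t) - exp (- (Q * t)).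
Definition exp_gap_ratio t := exp_gap t / (pq * t).
(* The contribution to [E[P_n]/n] of the level [k] with [n q^k = t], as n -> oo. *)
Definition level_limit t := exp_gap_ratio t - exp (- (Q * t)).

Lemma mul_exp_opp_le t : 0 <= t -> t * exp (- t) <= / (1 - q) * (exp (- (q * t)) - exp (- t)).
Proof.
  intros Ht.
  replace (exp (- (q * t))) with (exp (- t) * exp ((1 - q) * t)) by (rewrite <- exp_plus; f_equal; ring).
  pose proof (exp_ineq1_le ((1 - q) * t)). pose proof (exp_pos (- t)).
  apply (Rmult_le_reg_l (1 - q)); [lra|].
  replace ((1 - q) * (/ (1 - q) * (exp (- t) * exp ((1 - q) * t) - exp (- t))))
    with (exp (- t) * (exp ((1 - q) * t) - 1)) by (field; lra).
  assert (0 <= (1 - q) * t) by (apply Rmult_le_pos; lra). nra.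
Qed.

Lemma sq_mul_exp_opp_le t : 0 <= t -> t ^ 2 * exp (- t) <= 4 / (1 - q) ^ 2 * (exp (- (q * t)) - exp (- t)).
Proof.
  intros Ht. set (s := (1 - q) * t / 2).
  assert (Hs : 0 <= s) by (unfold s; assert (0 <= (1 - q) * t) by (apply Rmult_le_pos; lra); lra).
  replace (exp (- (q * t))) with (exp (- t) * exp s ^ 2)
    by (simpl; rewrite Rmult_1_r, <- !exp_plus; f_equal; unfold s; field).
  assert (H2 : (1 + s) ^ 2 <= exp s ^ 2) by (apply pow_incr; pose proof (exp_ineq1_le s); lra).
  pose proof (exp_pos (- t)).
  assert (0 < (1 - q) ^ 2) by (apply pow_lt; lra).
  apply (Rmult_le_reg_l ((1 - q) ^ 2)); [lra|].
  replace ((1 - q) ^ 2 * (4 / (1 - q) ^ 2 * (exp (- t) * exp s ^ 2 - exp (- t))))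
    with (4 * (exp (- t) * (exp s ^ 2 - 1))) by (field; lra).
  assert ((1 - q) ^ 2 * t ^ 2 <= 4 * (exp s ^ 2 - 1)) by (unfold s in *; nra).
  nra.
Qed.

Lemma level_limit_abs_le t : 0 < t -> Rabs (level_limit t) <= / q * (exp (- (q * t)) - exp (- t)).
Proof.
  intros Ht. pose proof pq_pos as Hc.
  set (y := pq * t). assert (Hy : 0 < y) by (unfold y; nra).
  set (e := exp (- y)).
  assert (He1 : e <= / (1 + y)) by (apply exp_opp_le_inv; lra).
  assert (He2 : 1 - y <= e) by apply exp_opp_ge.
  assert (He0 : 0 < e) by apply exp_pos.
  assert (Eh : level_limit t = exp (- t) * ((1 - e - y * e) / y)).
  { unfold level_limit, exp_gap_ratio, exp_gap, e, y.
    replace (exp (- (Q * t))) with (exp (- t) * exp (- (pq * t)))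
      by (rewrite <- exp_plus; f_equal; rewrite Q_eq; ring).
    field. split; lra. }
  (* 0 <= (1 - e - y e) / y <= y since e (1 + y) <= 1 and 1 - y <= e *)
  assert (Hpsi : 0 <= (1 - e - y * e) / y <= y).
  { assert (e * (1 + y) <= 1).
    { replace 1 with (/ (1 + y) * (1 + y)) at 2 by (field; lra). apply Rmult_le_compat_r; lra. }
    split; [apply Rdiv_le_0_compat; lra|].
    apply (Rmult_le_reg_r y); auto. unfold Rdiv. rewrite Rmult_assoc, Rinv_l, Rmult_1_r by lra. nra. }
  rewrite Eh. pose proof (exp_pos (- t)).
  rewrite Rabs_right by (apply Rle_ge, Rmult_le_pos; lra).
  apply Rle_trans with (exp (- t) * y); [apply Rmult_le_compat_l; lra|].
  pose proof (mul_exp_opp_le t (Rlt_le _ _ Ht)).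
  replace (exp (- t) * y) with (/ q * ((1 - q) * (t * exp (- t)))) by (unfold y, pq; field; lra).
  apply Rmult_le_compat_l; [left; apply Rinv_0_lt_compat; lra|].
  replace (exp (- (q * t)) - exp (- t)) with ((1 - q) * (/ (1 - q) * (exp (- (q * t)) - exp (- t))))
    by (field; lra).
  apply Rmult_le_compat_l; lra.
Qed.

Lemma level_limit_abs_le_lin t : 0 < t -> Rabs (level_limit t) <= t / q.
Proof.
  intros Ht. eapply Rle_trans; [apply level_limit_abs_le; auto|].
  assert (exp (- (q * t)) <= 1) by (apply exp_opp_le_1; nra).
  pose proof (exp_opp_ge t). assert (0 < / q) by (apply Rinv_0_lt_compat; lra).
  unfold Rdiv. rewrite Rmult_comm. apply Rmult_le_compat_r; lra.
Qed.

Lemma level_limit_abs_le_inv t : 0 < t -> Rabs (level_limit t) <= / (q * q * t).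
Proof.
  intros Ht. eapply Rle_trans; [apply level_limit_abs_le; auto|].
  pose proof (exp_opp_le_inv_id (q * t) ltac:(nra)). pose proof (exp_pos (- t)).
  assert (0 < / q) by (apply Rinv_0_lt_compat; lra).
  replace (/ (q * q * t)) with (/ q * / (q * t)) by (field; lra).
  apply Rmult_le_compat_l; lra.
Qed.

Definition level_exact (n : nat) (x : R) :=
  (1 - x) * ((1 - x) ^ n - (1 - Q * x) ^ n) / (pq * x) - INR n * (1 - Q * x) ^ n.

Lemma max_first_pos_level_exact n k : (1 <= k)%nat -> max_first_pos q n 1 k = level_exact n (q ^ k).
Proof.
  intros Hk. pose proof pq_pos. assert (0 < q ^ k) by (apply pow_lt; lra).
  assert (Hw : letter_prob q k = pq * q ^ k).
  { unfold letter_prob, pq. rewrite <- (Q_mul_pow k Hk). unfold Q. field. lra. }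
  apply (Rmult_eq_reg_r (letter_prob q k)); [|rewrite Hw; nra].
  rewrite max_first_pos_closed by auto.
  unfold prob_below, level_exact. rewrite Hw, <- (Q_mul_pow k Hk). simpl INR.
  unfold prob_atmost. field. lra.
Qed.

(* [level_weight n (q^k)] telescopes in [k] and takes values in [0, 3], so the
   level errors sum to [O(1/n)]. *)
Definition level_weight (n : nat) (x : R) :=
  exp (- (INR n * x)) + exp (- (INR n * (Q * x))) + (1 - Q * x) ^ n.

Lemma level_weight_range n x : 0 <= x -> Q * x <= 1 -> 0 <= level_weight n x <= 3.
Proof.
  intros Hx HQx. pose proof Q_gt_1. pose proof (pos_INR n). unfold level_weight.
  assert (0 <= Q * x) by nra.
  assert (exp (- (INR n * x)) <= 1) by (apply exp_opp_le_1; nra).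
  assert (exp (- (INR n * (Q * x))) <= 1) by (apply exp_opp_le_1; nra).
  assert (0 <= (1 - Q * x) ^ n <= 1) by (split; [apply pow_le| apply pow_le_one]; nra).
  pose proof (exp_pos (- (INR n * x))). pose proof (exp_pos (- (INR n * (Q * x)))). lra.
Qed.

Lemma pow_exp_div_le y n : (1 <= n)%nat -> 0 < y <= 1 ->
  Rabs (((1 - y) ^ n - exp (- (INR n * y))) / (INR n * y))
    <= 3 / ((1 - q) * INR n) * (exp (- (q * (INR n * y))) - exp (- (INR n * y))).
Proof.
  intros Hn Hy. assert (HN : 1 <= INR n) by (apply (le_INR 1); auto).
  pose proof (pow_exp_approx y n (conj (Rlt_le _ _ (proj1 Hy)) (proj2 Hy))) as H.
  pose proof (mul_exp_opp_le (INR n * y) ltac:(nra)) as T.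
  rewrite Rabs_div, (Rabs_right (INR n * y)) by nra.
  apply Rle_trans with (3 / INR n * (INR n * y * exp (- (INR n * y)))).
  - replace (3 / INR n * (INR n * y * exp (- (INR n * y))))
      with (3 * INR n * y ^ 2 * exp (- (INR n * y)) / (INR n * y)) by (field; lra).
    apply Rmult_le_compat_r; auto. left; apply Rinv_0_lt_compat; nra.
  - replace (3 / ((1 - q) * INR n) * (exp (- (q * (INR n * y))) - exp (- (INR n * y))))
      with (3 / INR n * (/ (1 - q) * (exp (- (q * (INR n * y))) - exp (- (INR n * y))))) by (field; lra).
    apply Rmult_le_compat_l; auto. apply Rdiv_le_0_compat; lra.
Qed.

Lemma pow_exp_sub_le y n : (1 <= n)%nat -> 0 <= y <= 1 ->
  Rabs ((1 - y) ^ n - exp (- (INR n * y)))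
    <= 12 / ((1 - q) ^ 2 * INR n) * (exp (- (q * (INR n * y))) - exp (- (INR n * y))).
Proof.
  intros Hn Hy. assert (HN : 1 <= INR n) by (apply (le_INR 1); auto).
  eapply Rle_trans; [apply pow_exp_approx; auto|].
  pose proof (sq_mul_exp_opp_le (INR n * y) ltac:(nra)) as T.
  replace (3 * INR n * y ^ 2 * exp (- (INR n * y)))
    with (3 / INR n * ((INR n * y) ^ 2 * exp (- (INR n * y)))) by (field; lra).
  replace (12 / ((1 - q) ^ 2 * INR n) * (exp (- (q * (INR n * y))) - exp (- (INR n * y))))
    with (3 / INR n * (4 / (1 - q) ^ 2 * (exp (- (q * (INR n * y))) - exp (- (INR n * y)))))
    by (field; lra).
  apply Rmult_le_compat_l; auto. apply Rdiv_le_0_compat; lra.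
Qed.

Definition level_error_const := 3 / (pq * (1 - q)) + 3 * Q / (pq * (1 - q)) + 12 / (1 - q) ^ 2 + / pq.

Lemma level_error_decomp n x : 0 < x -> 0 < INR n ->
  level_exact n x / INR n - level_limit (INR n * x) =
    ((1 - x) ^ n - exp (- (INR n * x))) / (pq * (INR n * x))
    - ((1 - Q * x) ^ n - exp (- (Q * (INR n * x)))) / (pq * (INR n * x))
    - ((1 - x) ^ n - (1 - Q * x) ^ n) / (pq * INR n)
    - ((1 - Q * x) ^ n - exp (- (Q * (INR n * x)))).
Proof.
  intros Hx HN. pose proof pq_pos.
  unfold level_exact, level_limit, exp_gap_ratio, exp_gap. field. lra.
Qed.

Lemma level_error_le_terms n x : (1 <= n)%nat -> 0 < x -> Q * x <= 1 ->
  Rabs (level_exact n x / INR n - level_limit (INR n * x))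
    <= (3 / (pq * (1 - q)) * (exp (- (q * (INR n * x))) - exp (- (INR n * x)))
        + (3 * Q / (pq * (1 - q)) + 12 / (1 - q) ^ 2) * (exp (- (INR n * x)) - exp (- (Q * (INR n * x))))
        + / pq * ((1 - x) ^ n - (1 - Q * x) ^ n)) / INR n.
Proof.
  intros Hn Hx HQx. pose proof pq_pos as Hc. pose proof Q_gt_1 as HQ.
  assert (HN : 1 <= INR n) by (apply (le_INR 1); auto).
  rewrite level_error_decomp by lra. set (N := INR n) in *.
  set (t := N * x). assert (Ht : 0 < t) by (unfold t; nra).
  set (d1 := exp (- (q * t)) - exp (- t)).
  set (d2 := exp (- t) - exp (- (Q * t))).
  set (d3 := (1 - x) ^ n - (1 - Q * x) ^ n).
  assert (HQt : q * (Q * t) = t) by (rewrite <- Rmult_assoc, q_mul_Q; ring).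
  assert (HNQx : N * (Q * x) = Q * t) by (unfold t; ring).
  set (X1 := ((1 - x) ^ n - exp (- t)) / (pq * t)).
  set (X3 := (1 - Q * x) ^ n - exp (- (Q * t))).
  set (X2 := X3 / (pq * t)).
  assert (b1 : Rabs X1 <= 3 / (pq * (1 - q)) * d1 / N).
  { unfold X1. replace (((1 - x) ^ n - exp (- t)) / (pq * t)) with (/ pq * (((1 - x) ^ n - exp (- t)) / t))
      by (field; lra).
    rewrite Rabs_mult, Rabs_right by (apply Rle_ge, Rlt_le, Rinv_0_lt_compat; lra).
    replace (3 / (pq * (1 - q)) * d1 / N) with (/ pq * (3 / ((1 - q) * N) * d1)) by (field; lra).
    apply Rmult_le_compat_l; [apply Rlt_le, Rinv_0_lt_compat; lra|].
    apply pow_exp_div_le; auto. nra. }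
  assert (b2 : Rabs X2 <= 3 * Q / (pq * (1 - q)) * d2 / N).
  { unfold X2, X3. replace (((1 - Q * x) ^ n - exp (- (Q * t))) / (pq * t))
      with (Q / pq * (((1 - Q * x) ^ n - exp (- (N * (Q * x)))) / (N * (Q * x)))) by (rewrite HNQx; field; lra).
    rewrite Rabs_mult, Rabs_right by (apply Rle_ge, Rlt_le, Rdiv_lt_0_compat; lra).
    replace (3 * Q / (pq * (1 - q)) * d2 / N) with (Q / pq * (3 / ((1 - q) * N) * d2)) by (field; lra).
    apply Rmult_le_compat_l; [apply Rlt_le, Rdiv_lt_0_compat; lra|].
    unfold d2. rewrite <- HNQx.
    replace (exp (- t)) with (exp (- (q * (N * (Q * x))))) by (rewrite HNQx, HQt; reflexivity).
    apply pow_exp_div_le; auto. nra. }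
  assert (b3 : Rabs X3 <= 12 / (1 - q) ^ 2 * d2 / N).
  { unfold X3. replace (12 / (1 - q) ^ 2 * d2 / N) with (12 / ((1 - q) ^ 2 * N) * d2) by (field; lra).
    unfold d2. rewrite <- HNQx.
    replace (exp (- t)) with (exp (- (q * (N * (Q * x))))) by (rewrite HNQx, HQt; reflexivity).
    apply pow_exp_sub_le; auto. nra. }
  assert (b4 : Rabs (d3 / (pq * N)) = / pq * d3 / N).
  { rewrite Rabs_right; [field; lra|]. apply Rle_ge, Rdiv_le_0_compat; [|nra].
    unfold d3. assert ((1 - Q * x) ^ n <= (1 - x) ^ n) by (apply pow_incr; nra). lra. }
  assert (Hm : forall a b, Rabs (a - b) <= Rabs a + Rabs b).
  { intros a b. unfold Rminus. rewrite <- (Rabs_Ropp b). apply Rabs_triang. }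
  pose proof (Hm (X1 - X2 - d3 / (pq * N)) X3). pose proof (Hm (X1 - X2) (d3 / (pq * N))).
  pose proof (Hm X1 X2).
  replace ((3 / (pq * (1 - q)) * d1 + (3 * Q / (pq * (1 - q)) + 12 / (1 - q) ^ 2) * d2 + / pq * d3) / N)
    with (3 / (pq * (1 - q)) * d1 / N + 3 * Q / (pq * (1 - q)) * d2 / N + 12 / (1 - q) ^ 2 * d2 / N
          + / pq * d3 / N) by (field; lra).
  lra.
Qed.

Lemma level_error_le n x : (1 <= n)%nat -> 0 < x -> Q * x <= 1 ->
  Rabs (level_exact n x / INR n - level_limit (INR n * x))
    <= level_error_const / INR n * (level_weight n (q * x) - level_weight n x).
Proof.
  intros Hn Hx HQx. pose proof pq_pos as Hc. pose proof Q_gt_1 as HQ.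
  assert (HN : 0 < INR n) by (apply (lt_INR 0); lia).
  eapply Rle_trans; [apply level_error_le_terms; auto|].
  set (t := INR n * x). assert (Ht : 0 < t) by (unfold t; nra).
  set (d1 := exp (- (q * t)) - exp (- t)).
  set (d2 := exp (- t) - exp (- (Q * t))).
  set (d3 := (1 - x) ^ n - (1 - Q * x) ^ n).
  assert (Hd : 0 <= d1 /\ 0 <= d2 /\ 0 <= d3).
  { unfold d1, d2, d3. pose proof (exp_increasing (- t) (- (q * t))).
    pose proof (exp_increasing (- (Q * t)) (- t)).
    assert ((1 - Q * x) ^ n <= (1 - x) ^ n) by (apply pow_incr; nra). repeat split; nra. }
  replace (level_weight n (q * x) - level_weight n x) with (d1 + d2 + d3).
  2:{ unfold level_weight, d1, d2, d3, t.
      replace (Q * (q * x)) with x by (rewrite <- Rmult_assoc, (Rmult_comm Q), q_mul_Q; ring).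
      replace (INR n * (q * x)) with (q * (INR n * x)) by ring.
      replace (INR n * (Q * x)) with (Q * (INR n * x)) by ring. ring. }
  set (a1 := 3 / (pq * (1 - q))). set (a2 := 3 * Q / (pq * (1 - q))).
  set (a3 := 12 / (1 - q) ^ 2). set (a4 := / pq).
  assert (Ha : 0 <= a1 /\ 0 <= a2 /\ 0 <= a3 /\ 0 <= a4).
  { assert (0 < pq * (1 - q)) by (apply Rmult_lt_0_compat; lra).
    unfold a1, a2, a3, a4; repeat split; apply Rlt_le;
      [apply Rdiv_lt_0_compat| apply Rdiv_lt_0_compat| apply Rdiv_lt_0_compat; [|apply pow_lt]
      | apply Rinv_0_lt_compat]; lra. }
  replace (level_error_const / INR n * (d1 + d2 + d3)) with ((a1 + a2 + a3 + a4) * (d1 + d2 + d3) / INR n)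
    by (unfold level_error_const, a1, a2, a3, a4; field; lra).
  apply Rmult_le_compat_r; [apply Rlt_le, Rinv_0_lt_compat; lra|].
  destruct Ha as (Ha1 & Ha2 & Ha3 & Ha4). destruct Hd as (Hd1 & Hd2 & Hd3).
  assert (0 <= (a2 + a3 + a4) * d1) by (apply Rmult_le_pos; lra).
  assert (0 <= (a1 + a4) * d2) by (apply Rmult_le_pos; lra).
  assert (0 <= (a1 + a2 + a3) * d3) by (apply Rmult_le_pos; lra).
  lra.
Qed.

Lemma pow_level_range k : (1 <= k)%nat -> 0 < q ^ k /\ Q * q ^ k <= 1.
Proof.
  intros Hk. split; [apply pow_lt; lra|]. rewrite Q_mul_pow by auto. apply pow_le_one; lra.
Qed.

Lemma lsum_level_error_le n M : (1 <= n)%nat ->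
  Rabs (lsum (fun k => max_first_pos q n 1 k / INR n - level_limit (INR n * q ^ k)) (seq 1 M))
    <= 3 * level_error_const / INR n.
Proof.
  intros Hn. eapply Rle_trans; [apply lsum_abs|].
  eapply Rle_trans.
  { apply lsum_le_in with
      (g := fun k => level_error_const / INR n * (level_weight n (q ^ S k) - level_weight n (q ^ k))).
    intros k Hk. apply in_seq in Hk. destruct (pow_level_range k ltac:(lia)).
    rewrite max_first_pos_level_exact by lia. apply level_error_le; auto. }
  rewrite lsum_scal, (lsum_telescope (fun k => level_weight n (q ^ k))).
  assert (0 < level_error_const / INR n).
  { apply Rdiv_lt_0_compat; [|apply (lt_INR 0); lia].
    pose proof pq_pos. pose proof Q_gt_1.
    assert (0 < pq * (1 - q)) by (apply Rmult_lt_0_compat; lra).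
    assert (0 < (1 - q) ^ 2) by (apply pow_lt; lra).
    assert (0 < 3 / (pq * (1 - q))) by (apply Rdiv_lt_0_compat; lra).
    assert (0 < 3 * Q / (pq * (1 - q))) by (apply Rdiv_lt_0_compat; lra).
    assert (0 < 12 / (1 - q) ^ 2) by (apply Rdiv_lt_0_compat; lra).
    assert (0 < / pq) by (apply Rinv_0_lt_compat; lra).
    unfold level_error_const. lra. }
  destruct (pow_level_range (1 + M) ltac:(lia)). destruct (pow_level_range 1 ltac:(lia)).
  pose proof (level_weight_range n (q ^ (1 + M)) ltac:(lra) ltac:(auto)).
  pose proof (level_weight_range n (q ^ 1) ltac:(lra) ltac:(auto)).
  replace (3 * level_error_const / INR n) with (level_error_const / INR n * 3)
    by (field; apply not_0_INR; lia).
  apply Rmult_le_compat_l; lra.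
Qed.

Lemma lsum_abs_level_limit_le x M : 0 < x -> lsum (fun k => Rabs (level_limit (x * q ^ k))) (seq 1 M) <= / q.
Proof.
  intros Hx. eapply Rle_trans.
  { apply lsum_le with (g := fun k => / q * (exp (- (x * q ^ S k)) - exp (- (x * q ^ k)))).
    intros k. replace (x * q ^ S k) with (q * (x * q ^ k)) by (simpl; ring).
    apply level_limit_abs_le. apply Rmult_lt_0_compat; [lra| apply pow_lt; lra]. }
  rewrite lsum_scal, (lsum_telescope (fun k => exp (- (x * q ^ k)))).
  assert (exp (- (x * q ^ (1 + M))) <= 1) by (apply exp_opp_le_1; apply Rmult_le_pos; [lra| apply pow_le; lra]).
  pose proof (exp_pos (- (x * q ^ 1))). assert (0 < / q) by (apply Rinv_0_lt_compat; lra).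
  rewrite <- (Rmult_1_r (/ q)) at 2. apply Rmult_le_compat_l; lra.
Qed.

Lemma upper_levels_abs_le x M : 0 < x ->
  Rabs (level_limit x) + lsum (fun j => Rabs (level_limit (x * Q ^ S j))) (seq 0 M) <= / q * exp (- (q * x)).
Proof.
  intros Hx. pose proof (level_limit_abs_le x Hx).
  assert (Hs : lsum (fun j => Rabs (level_limit (x * Q ^ S j))) (seq 0 M) <=
               / q * (exp (- x) - exp (- (x * Q ^ M)))).
  { eapply Rle_trans.
    { apply lsum_le with (g := fun j => - / q * (exp (- (x * Q ^ S j)) - exp (- (x * Q ^ j)))).
      intros j. replace (- / q * (exp (- (x * Q ^ S j)) - exp (- (x * Q ^ j))))
        with (/ q * (exp (- (q * (x * Q ^ S j))) - exp (- (x * Q ^ S j)))).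
      - apply level_limit_abs_le. apply Rmult_lt_0_compat; [lra| apply Q_pow_pos].
      - replace (q * (x * Q ^ S j)) with (x * Q ^ j * (q * Q)) by (simpl; ring).
        rewrite q_mul_Q, Rmult_1_r. ring. }
    rewrite lsum_scal, (lsum_telescope (fun j => exp (- (x * Q ^ j)))), pow_O, Rmult_1_r.
    rewrite Nat.add_0_l. right; ring. }
  pose proof (exp_pos (- (x * Q ^ M))). assert (0 < / q) by (apply Rinv_0_lt_compat; lra).
  assert (0 < / q * exp (- (x * Q ^ M))) by (apply Rmult_lt_0_compat; lra).
  lra.
Qed.

(** * The bilateral sum *)

(* [bisum g x N] is the symmetric partial sum of [g (x q^k)] over [-N <= k < N]. *)
Definition bisum (g : R -> R) (x : R) (N : nat) :=
  lsum (fun j => g (x * q ^ j) + g (x * Q ^ S j)) (seq 0 N).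

Lemma bisum_scale g x N :
  bisum g (Q * x) (S N) - bisum g x (S N) = g (x * Q ^ S (S N)) - g (x * q ^ N).
Proof.
  unfold bisum. induction N.
  - unfold lsum; simpl. rewrite !Rmult_1_r.
    replace (Q * x * Q) with (x * (Q * Q)) by ring. replace (Q * x) with (x * Q) by ring. ring.
  - rewrite (lsum_seq_S (fun j => g (Q * x * q ^ j) + g (Q * x * Q ^ S j))),
            (lsum_seq_S (fun j => g (x * q ^ j) + g (x * Q ^ S j))).
    match goal with |- ?A + ?B - (?C + ?D) = _ => replace (A + B - (C + D)) with ((A - C) + B - D) by ring end.
    rewrite IHN, Nat.add_0_l.
    replace (Q * x * q ^ S N) with (x * q ^ N) by
      (simpl; transitivity (x * q ^ N * (q * Q)); [rewrite q_mul_Q; ring| ring]).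
    replace (Q * x * Q ^ S (S N)) with (x * Q ^ S (S (S N))) by (simpl; ring).
    ring.
Qed.

Definition level_sum (x : R) := real (Lim_seq (bisum level_limit x)).

Lemma level_sum_spec x : 0 < x ->
  is_lim_seq (bisum level_limit x) (level_sum x) /\
  forall N, Rabs (level_sum x - bisum level_limit x N) <= / q * (q ^ N / x + x * q ^ N).
Proof.
  intros Hx.
  set (w := fun j => / q * (exp (- (x * Q ^ j)) - exp (- (x * q ^ j)))).
  assert (Hdom : forall j, Rabs (level_limit (x * q ^ j) + level_limit (x * Q ^ S j)) <= w j - w (S j)).
  { intros j. unfold w.
    pose proof (level_limit_abs_le (x * q ^ j) ltac:(apply Rmult_lt_0_compat; auto; apply pow_lt; lra)).
    pose proof (level_limit_abs_le (x * Q ^ S j) ltac:(apply Rmult_lt_0_compat; auto; apply Q_pow_pos)).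
    replace (q * (x * q ^ j)) with (x * q ^ S j) in * by (simpl; ring).
    replace (q * (x * Q ^ S j)) with (x * Q ^ j) in *
      by (transitivity (x * Q ^ j * (q * Q)); [rewrite q_mul_Q; ring| simpl; ring]).
    eapply Rle_trans; [apply Rabs_triang|]. lra. }
  assert (Hw : is_lim_seq w (- / q)).
  { unfold w. replace (- / q) with (/ q * (0 - 1)) by ring.
    apply is_lim_seq_mult'; [apply is_lim_seq_const|]. apply is_lim_seq_minus'.
    - apply is_lim_seq_le_le with (fun _ => 0) (fun j => / x * q ^ j);
        [|apply is_lim_seq_const| apply is_lim_seq_scal_geom; lra].
      intros j. split; [left; apply exp_pos|].
      eapply Rle_trans; [apply exp_opp_le_inv_id; apply Rmult_lt_0_compat; auto; apply Q_pow_pos|].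
      right. rewrite Q_pow. field. repeat split; try apply pow_nonzero; lra.
    - apply is_lim_seq_le_le with (fun j => 1 - x * q ^ j) (fun _ => 1);
        [|replace (Finite 1) with (Finite (1 - 0)) by (f_equal; ring);
          apply is_lim_seq_minus'; [apply is_lim_seq_const| apply is_lim_seq_scal_geom; lra]
         | apply is_lim_seq_const].
      intros j. split; [apply exp_opp_ge| apply exp_opp_le_1].
      apply Rmult_le_pos; [lra| apply pow_le; lra]. }
  destruct (series_telescoping_bound _ w (- / q) Hdom Hw) as [s [Hs Hb]].
  assert (E : level_sum x = s) by (unfold level_sum, bisum; rewrite (is_lim_seq_unique _ _ Hs); reflexivity).
  rewrite E. split; [exact Hs|]. intros N. eapply Rle_trans; [apply Hb|].
  unfold w.
  assert (exp (- (x * Q ^ N)) <= q ^ N / x).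
  { eapply Rle_trans; [apply exp_opp_le_inv_id; apply Rmult_lt_0_compat; auto; apply Q_pow_pos|].
    right. rewrite Q_pow. field. repeat split; try apply pow_nonzero; lra. }
  assert (1 - exp (- (x * q ^ N)) <= x * q ^ N) by (pose proof (exp_opp_ge (x * q ^ N)); lra).
  replace (/ q * (exp (- (x * Q ^ N)) - exp (- (x * q ^ N))) - - / q)
    with (/ q * (exp (- (x * Q ^ N)) + (1 - exp (- (x * q ^ N))))) by ring.
  apply Rmult_le_compat_l; [apply Rlt_le, Rinv_0_lt_compat|]; lra.
Qed.

Lemma partial_EP_level_sum_dist n M : (1 <= n)%nat ->
  Rabs (partial_EP (1 - q) q n M / INR n - bisum level_limit (INR n) (S M))
    <= 3 * level_error_const / INR n + / q * exp (- (q * INR n)).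
Proof.
  intros Hn. assert (HN : 1 <= INR n) by (apply (le_INR 1); auto).
  rewrite partial_EP_closed.
  pose proof (lsum_level_error_le n M Hn). pose proof (upper_levels_abs_le (INR n) (S M) ltac:(lra)).
  pose proof (lsum_abs (fun j => level_limit (INR n * Q ^ S j)) (seq 0 (S M))). cbv beta in *.
  set (N := INR n) in *.
  set (X := lsum (fun k => max_first_pos q n 1 k / N - level_limit (N * q ^ k)) (seq 1 M)) in *.
  set (Y := lsum (fun j => level_limit (N * Q ^ S j)) (seq 0 (S M))) in *.
  assert (E1 : lsum (max_first_pos q n 1) (seq 1 M) / N = X + lsum (fun k => level_limit (N * q ^ k)) (seq 1 M)).
  { unfold X. rewrite <- lsum_plus. unfold Rdiv. rewrite Rmult_comm, <- lsum_scal.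
    apply lsum_ext. intros; ring. }
  assert (E2 : bisum level_limit N (S M) = level_limit N + lsum (fun k => level_limit (N * q ^ k)) (seq 1 M) + Y).
  { unfold bisum, Y. rewrite lsum_plus. change (seq 0 (S M)) with (0%nat :: seq 1 M) at 1.
    rewrite lsum_cons, pow_O, Rmult_1_r. reflexivity. }
  rewrite E1, E2.
  replace (X + lsum (fun k => level_limit (N * q ^ k)) (seq 1 M) -
           (level_limit N + lsum (fun k => level_limit (N * q ^ k)) (seq 1 M) + Y))
    with (X + (- level_limit N - Y)) by ring.
  eapply Rle_trans; [apply Rabs_triang|].
  eapply Rle_trans; [apply Rplus_le_compat_l, Rabs_triang|].
  rewrite !Rabs_Ropp. lra.
Qed.

Lemma is_lim_seq_partial_EP n : (1 <= n)%nat ->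
  is_lim_seq (fun M => partial_EP (1 - q) q n M) (EP (1 - q) q n).
Proof.
  intros Hn. assert (HN : 1 <= INR n) by (apply (le_INR 1); auto).
  destruct (ex_finite_lim_seq_incr (fun M => partial_EP (1 - q) q n M)
              (INR n * (3 * level_error_const / INR n + / q))) as [l Hl].
  - intros M. rewrite !partial_EP_closed, lsum_seq_S.
    pose proof (max_first_pos_nonneg q n 1 (1 + M) ltac:(lra) ltac:(lia)). lra.
  - intros M. rewrite partial_EP_closed.
    replace (lsum (max_first_pos q n 1) (seq 1 M)) with (INR n * (lsum (max_first_pos q n 1) (seq 1 M) / INR n))
      by (field; lra).
    apply Rmult_le_compat_l; [lra|].
    replace (lsum (max_first_pos q n 1) (seq 1 M) / INR n)
      with (lsum (fun k => max_first_pos q n 1 k / INR n - level_limit (INR n * q ^ k)) (seq 1 M)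
            + lsum (fun k => level_limit (INR n * q ^ k)) (seq 1 M)).
    2:{ rewrite <- lsum_plus. unfold Rdiv. rewrite Rmult_comm, <- lsum_scal. apply lsum_ext; intros; ring. }
    pose proof (lsum_level_error_le n M Hn). pose proof (lsum_abs_level_limit_le (INR n) M ltac:(lra)).
    pose proof (lsum_abs (fun k => level_limit (INR n * q ^ k)) (seq 1 M)). cbv beta in *.
    match goal with |- ?A + ?B <= _ => pose proof (Rle_abs A); pose proof (Rle_abs B) end. lra.
  - unfold EP. rewrite (is_lim_seq_unique _ _ Hl). exact Hl.
Qed.

Lemma EP_level_sum_dist n : (1 <= n)%nat ->
  Rabs (EP (1 - q) q n / INR n - level_sum (INR n)) <= 3 * level_error_const / INR n + / q * exp (- (q * INR n)).
Proof.
  intros Hn. assert (HN : 0 < INR n) by (apply (lt_INR 0); lia).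
  destruct (level_sum_spec (INR n) HN) as [HF _].
  change (Rbar_le (Rabs (EP (1 - q) q n / INR n - level_sum (INR n)))
                  (3 * level_error_const / INR n + / q * exp (- (q * INR n)))).
  apply (is_lim_seq_le (fun M => Rabs (partial_EP (1 - q) q n M / INR n - bisum level_limit (INR n) (S M)))
                       (fun _ => 3 * level_error_const / INR n + / q * exp (- (q * INR n))));
    [intros M; apply partial_EP_level_sum_dist; auto| |apply is_lim_seq_const].
  apply (is_lim_seq_abs _ (EP (1 - q) q n / INR n - level_sum (INR n))).
  apply is_lim_seq_minus'; [|apply (is_lim_seq_incr_1 (bisum level_limit (INR n))); exact HF].
  apply (is_lim_seq_scal_r _ (/ INR n) (EP (1 - q) q n)). apply is_lim_seq_partial_EP; auto.
Qed.

Lemma EP_div_sub_level_sum_cvg :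
  is_lim_seq (fun n => EP (1 - q) q (S n) / INR (S n) - level_sum (INR (S n))) 0.
Proof.
  apply (is_lim_seq_of_abs_le _ (fun n => (3 * level_error_const + / q * / q) / INR (S n)));
    [|apply is_lim_seq_div_INR_S].
  intros n. rewrite Rminus_0_r. assert (HN : 1 <= INR (S n)) by (apply (le_INR 1); lia).
  eapply Rle_trans; [apply EP_level_sum_dist; lia|].
  assert (exp (- (q * INR (S n))) <= / (q * INR (S n))) by (apply exp_opp_le_inv_id; nra).
  replace ((3 * level_error_const + / q * / q) / INR (S n))
    with (3 * level_error_const / INR (S n) + / q * / (q * INR (S n))) by (field; split; lra).
  apply Rplus_le_compat_l, Rmult_le_compat_l; [apply Rlt_le, Rinv_0_lt_compat|]; lra.
Qed.

(** * Periodicity and continuity of the bilateral sum *)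

Lemma level_limit_continuous t : 0 < t -> continuous level_limit t.
Proof.
  intros Ht. pose proof pq_pos.
  apply (ex_derive_continuous (K := R_AbsRing) (V := R_NormedModule)).
  unfold level_limit, exp_gap_ratio, exp_gap. auto_derive. nra.
Qed.

Lemma bisum_continuous g N x0 : 0 < x0 -> (forall t, 0 < t -> continuous g t) ->
  continuous (fun x => bisum g x N) x0.
Proof.
  intros Hx0 Hg. unfold bisum.
  apply (continuous_lsum (fun j x => g (x * q ^ j) + g (x * Q ^ S j))). intros j.
  assert (Hmul : forall r, continuous (fun x => x * r) x0).
  { intros r. apply (ex_derive_continuous (K := R_AbsRing) (V := R_NormedModule)). auto_derive; auto. }
  apply (continuous_plus (V := R_NormedModule) (fun x => g (x * q ^ j)) (fun x => g (x * Q ^ S j)));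
    apply (continuous_comp (fun x => x * _) g); auto; apply Hg.
  - apply Rmult_lt_0_compat; [lra| apply pow_lt; lra].
  - apply Rmult_lt_0_compat; [lra| apply Q_pow_pos].
Qed.

Lemma level_sum_scale x : 0 < x -> level_sum (Q * x) = level_sum x.
Proof.
  intros Hx. pose proof Q_gt_1.
  destruct (level_sum_spec x Hx) as [H1 _].
  destruct (level_sum_spec (Q * x) ltac:(nra)) as [H2 _].
  assert (Hlim := is_lim_seq_minus' _ _ _ _ (proj1 (is_lim_seq_incr_1 _ _) H2) (proj1 (is_lim_seq_incr_1 _ _) H1)).
  cbv beta in Hlim.
  assert (H0 : is_lim_seq (fun N => bisum level_limit (Q * x) (S N) - bisum level_limit x (S N)) 0).
  { apply (is_lim_seq_ext (fun N => level_limit (x * Q ^ S (S N)) - level_limit (x * q ^ N)));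
      [intros N; symmetry; apply bisum_scale|].
    apply (is_lim_seq_of_abs_le _ (fun N => (/ (q * q * x) * q ^ 2 + / q * x) * q ^ N));
      [|apply is_lim_seq_scal_geom; lra].
    intros N. rewrite Rminus_0_r.
    eapply Rle_trans; [apply Rabs_triang|]. rewrite Rabs_Ropp.
    assert (0 < q ^ N) by (apply pow_lt; lra).
    rewrite Rmult_plus_distr_r. apply Rplus_le_compat.
    - eapply Rle_trans; [apply level_limit_abs_le_inv; apply Rmult_lt_0_compat; [lra| apply Q_pow_pos]|].
      right. rewrite Q_pow. simpl. field. repeat split; lra.
    - eapply Rle_trans; [apply level_limit_abs_le_lin; apply Rmult_lt_0_compat; lra|].
      right. field. lra. }
  pose proof (is_lim_seq_unique _ _ Hlim) as E1. rewrite (is_lim_seq_unique _ _ H0) in E1.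
  injection E1. lra.
Qed.

Lemma level_sum_continuous x0 : 0 < x0 -> continuous level_sum x0.
Proof.
  intros Hx0.
  apply (continuous_of_uniform_approx level_sum (fun N x => bisum level_limit x N)
           (fun N => / q * (2 / x0 + 2 * x0) * q ^ N) x0 (x0 / 2));
    [lra| |  | apply is_lim_seq_scal_geom; lra].
  - intros N. apply bisum_continuous; auto. apply level_limit_continuous.
  - intros N x Hx. apply Rabs_lt_between' in Hx.
    destruct (level_sum_spec x ltac:(lra)) as [_ Hb]. eapply Rle_trans; [apply Hb|].
    assert (0 < q ^ N) by (apply pow_lt; lra).
    assert (q ^ N / x <= q ^ N * (2 / x0)).
    { unfold Rdiv. apply Rmult_le_compat_l; [lra|].
      replace (2 * / x0) with (/ (x0 / 2)) by (field; lra). apply Rinv_le_contravar; lra. }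
    replace (/ q * (2 / x0 + 2 * x0) * q ^ N) with (/ q * (q ^ N * (2 / x0) + q ^ N * (2 * x0))) by ring.
    apply Rmult_le_compat_l; [apply Rlt_le, Rinv_0_lt_compat; lra| nra].
Qed.

(** * The mean value over a period *)

Definition lnQ := ln Q.
Definition Qexp (u : R) := exp (u * lnQ).

Lemma lnQ_pos : 0 < lnQ.
Proof. unfold lnQ. rewrite <- ln_1. apply ln_increasing; [lra| apply Q_gt_1]. Qed.

Lemma Qexp_add_1 u : Qexp (u + 1) = Q * Qexp u.
Proof.
  unfold Qexp. rewrite Rmult_plus_distr_r, Rmult_1_l, exp_plus, Rmult_comm.
  unfold lnQ. rewrite exp_ln; [reflexivity|]. pose proof Q_gt_1; lra.
Qed.

Lemma Qexp_log x : 0 < x -> Qexp (ln x / lnQ) = x.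
Proof.
  intros Hx. pose proof lnQ_pos. unfold Qexp.
  replace (ln x / lnQ * lnQ) with (ln x) by (field; lra). apply exp_ln; auto.
Qed.

Lemma Qexp_continuous u : continuous Qexp u.
Proof.
  apply (ex_derive_continuous (K := R_AbsRing) (V := R_NormedModule)). unfold Qexp. auto_derive. auto.
Qed.

Lemma Qexp_range u : 0 <= u <= 1 -> 1 <= Qexp u <= Q.
Proof.
  intros Hu. pose proof lnQ_pos. unfold Qexp. split.
  - rewrite <- exp_0. apply exp_le. nra.
  - replace Q with (exp (1 * lnQ)) by (rewrite Rmult_1_l; apply exp_ln; pose proof Q_gt_1; lra).
    apply exp_le. nra.
Qed.

Lemma level_sum_Qexp_continuous u : continuous (fun u => level_sum (Qexp u)) u.
Proof. apply (continuous_comp Qexp level_sum); [apply Qexp_continuous| apply level_sum_continuous, exp_pos]. Qed.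

(* The identity [level_limit t = - t exp_gap_ratio'(t) - exp_gap t / pq], in the variable u = log_Q t. *)
Lemma exp_gap_ratio_Qexp_derive r u : 0 < r ->
  is_derive (fun u => exp_gap_ratio (Qexp u * r)) u
    (- lnQ * (level_limit (Qexp u * r) + / pq * exp_gap (Qexp u * r))).
Proof.
  intros Hr. pose proof pq_pos. pose proof (exp_pos (u * lnQ)).
  unfold level_limit, exp_gap_ratio, exp_gap, Qexp. auto_derive.
  - apply Rgt_not_eq. apply Rmult_lt_0_compat; [lra| apply Rmult_lt_0_compat; lra].
  - rewrite Q_eq. field. split; lra.
Qed.

Lemma bisum_exp_gap_ratio_Qexp_derive N u :
  is_derive (fun u => bisum exp_gap_ratio (Qexp u) N) u
    (- lnQ * (bisum level_limit (Qexp u) N + / pq * bisum exp_gap (Qexp u) N)).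
Proof.
  set (dD := fun r => - lnQ * (level_limit (Qexp u * r) + / pq * exp_gap (Qexp u * r))).
  replace (- lnQ * (bisum level_limit (Qexp u) N + / pq * bisum exp_gap (Qexp u) N))
    with (lsum (fun j => dD (q ^ j) + dD (Q ^ S j)) (seq 0 N)).
  2:{ unfold bisum, dD. rewrite <- lsum_scal, <- lsum_plus, <- lsum_scal.
      apply lsum_ext. intros j. ring. }
  apply (is_derive_lsum (fun j u => exp_gap_ratio (Qexp u * q ^ j) + exp_gap_ratio (Qexp u * Q ^ S j))
                        (fun j u => dD (q ^ j) + dD (Q ^ S j))).
  intros j.
  apply (is_derive_plus (fun u => exp_gap_ratio (Qexp u * q ^ j)) (fun u => exp_gap_ratio (Qexp u * Q ^ S j)));
    apply exp_gap_ratio_Qexp_derive; [apply pow_lt; lra| apply Q_pow_pos].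
Qed.

Lemma bisum_exp_gap x N : bisum exp_gap x (S N) = exp (- (x * q ^ N)) - exp (- (x * Q ^ S (S N))).
Proof.
  pose proof (bisum_scale (fun t => exp (- t)) x N) as H.
  transitivity (bisum (fun t => exp (- t)) x (S N) - bisum (fun t => exp (- t)) (Q * x) (S N)); [|lra].
  unfold bisum, exp_gap. rewrite <- lsum_minus. apply lsum_ext. intros j.
  replace (Q * (x * q ^ j)) with (Q * x * q ^ j) by ring.
  replace (Q * (x * Q ^ S j)) with (Q * x * Q ^ S j) by ring. ring.
Qed.

Lemma exp_gap_ratio_near_0 t : 0 < t -> Rabs (exp_gap_ratio t - 1) <= (1 + Q ^ 2) * t / pq.
Proof.
  intros Ht. pose proof pq_pos as Hc. pose proof Q_gt_1 as HQ.
  pose proof (exp_opp_ge t). pose proof (exp_opp_le_quadratic t ltac:(lra)).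
  pose proof (exp_opp_ge (Q * t)). pose proof (exp_opp_le_quadratic (Q * t) ltac:(nra)).
  set (r1 := exp (- t) - (1 - t)). set (r2 := exp (- (Q * t)) - (1 - Q * t)).
  assert (Hr : 0 <= r1 <= t ^ 2 /\ 0 <= r2 <= Q ^ 2 * t ^ 2).
  { unfold r1, r2. replace (Q ^ 2 * t ^ 2) with ((Q * t) ^ 2) by ring. lra. }
  assert (E : exp_gap_ratio t - 1 = (r1 - r2) / (pq * t)).
  { unfold exp_gap_ratio, exp_gap, r1, r2. rewrite Q_eq. field. split; lra. }
  rewrite E, Rabs_div, (Rabs_right (pq * t)) by nra.
  replace ((1 + Q ^ 2) * t / pq) with ((1 + Q ^ 2) * t ^ 2 / (pq * t)) by (field; lra).
  unfold Rdiv. apply Rmult_le_compat_r; [left; apply Rinv_0_lt_compat; nra|].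
  pose proof (pow2_ge_0 t). apply Rabs_le. lra.
Qed.

Lemma exp_gap_ratio_abs_le t : 0 < t -> Rabs (exp_gap_ratio t) <= 2 / (pq * t).
Proof.
  intros Ht. pose proof pq_pos. pose proof Q_gt_1.
  unfold exp_gap_ratio, exp_gap. rewrite Rabs_div, (Rabs_right (pq * t)) by nra.
  unfold Rdiv. apply Rmult_le_compat_r; [left; apply Rinv_0_lt_compat; nra|].
  pose proof (exp_opp_le_1 t ltac:(lra)). pose proof (exp_opp_le_1 (Q * t) ltac:(nra)).
  pose proof (exp_pos (- t)). pose proof (exp_pos (- (Q * t))).
  apply Rabs_le. lra.
Qed.

Lemma RInt_bisum_level_limit_Qexp N :
  RInt (fun u => bisum level_limit (Qexp u) (S N)) 0 1 =
  / lnQ * (exp_gap_ratio (q ^ N) - exp_gap_ratio (Q ^ S (S N)))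
  - / pq * RInt (fun u => bisum exp_gap (Qexp u) (S N)) 0 1.
Proof.
  pose proof lnQ_pos. pose proof pq_pos.
  assert (HB : forall u, continuous (fun u => bisum exp_gap (Qexp u) (S N)) u).
  { intros u. apply (continuous_comp Qexp (fun x => bisum exp_gap x (S N))); [apply Qexp_continuous|].
    apply bisum_continuous; [apply exp_pos|]. intros t _.
    apply (ex_derive_continuous (K := R_AbsRing) (V := R_NormedModule)). unfold exp_gap. auto_derive. auto. }
  assert (HA : forall u, continuous (fun u => bisum level_limit (Qexp u) (S N)) u).
  { intros u. apply (continuous_comp Qexp (fun x => bisum level_limit x (S N))); [apply Qexp_continuous|].
    apply bisum_continuous; [apply exp_pos| apply level_limit_continuous]. }
  assert (Hftc := is_RInt_derive (fun u => bisum exp_gap_ratio (Qexp u) (S N)) _ 0 1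
                    (fun u _ => bisum_exp_gap_ratio_Qexp_derive (S N) u)
                    (fun u _ => continuous_scal_r (- lnQ) _ u
                       (continuous_plus (V := R_NormedModule) _ _ u (HA u)
                          (continuous_scal_r (/ pq) _ u (HB u))))).
  assert (Hends : bisum exp_gap_ratio (Qexp 1) (S N) - bisum exp_gap_ratio (Qexp 0) (S N)
                  = exp_gap_ratio (Q ^ S (S N)) - exp_gap_ratio (q ^ N)).
  { replace (Qexp 1) with (Q * 1)
      by (unfold Qexp, lnQ; rewrite Rmult_1_l, exp_ln; [ring| pose proof Q_gt_1; lra]).
    replace (Qexp 0) with 1 by (unfold Qexp; rewrite Rmult_0_l, exp_0; reflexivity).
    replace (Q ^ S (S N)) with (1 * Q ^ S (S N)) by ring.
    replace (q ^ N) with (1 * q ^ N) by ring. apply bisum_scale. }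
  apply is_RInt_unique.
  apply (is_RInt_ext (fun u => (- / lnQ) * (- lnQ * (bisum level_limit (Qexp u) (S N)
                                                   + / pq * bisum exp_gap (Qexp u) (S N)))
                               - / pq * bisum exp_gap (Qexp u) (S N))).
  { intros u _. simpl. field. lra. }
  replace (/ lnQ * (exp_gap_ratio (q ^ N) - exp_gap_ratio (Q ^ S (S N))))
    with (- / lnQ * (exp_gap_ratio (Q ^ S (S N)) - exp_gap_ratio (q ^ N))) by ring.
  apply is_RInt_lincomb; [rewrite <- Hends; exact Hftc|].
  apply (RInt_correct (V := R_CompleteNormedModule)).
  apply (ex_RInt_continuous (V := R_CompleteNormedModule)). intros u _. apply HB.
Qed.

Lemma RInt_bisum_exp_gap_Qexp_dist N :
  Rabs (RInt (fun u => bisum exp_gap (Qexp u) (S N)) 0 1 - 1) <= Q * q ^ N + q ^ S (S N).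
Proof.
  replace 1 with (RInt (fun _ => 1) 0 1) at 2 by (rewrite RInt_const; compute; ring).
  replace (Q * q ^ N + q ^ S (S N)) with ((1 - 0) * (Q * q ^ N + q ^ S (S N))) by ring.
  apply RInt_dist_le; [lra| | intros; apply continuous_const|].
  { intros u _. apply (continuous_comp Qexp (fun x => bisum exp_gap x (S N))); [apply Qexp_continuous|].
    apply bisum_continuous; [apply exp_pos|]. intros t _.
    apply (ex_derive_continuous (K := R_AbsRing) (V := R_NormedModule)). unfold exp_gap. auto_derive. auto. }
  intros u Hu. destruct (Qexp_range u Hu) as [Hx1 Hx2]. set (x := Qexp u) in *.
  rewrite bisum_exp_gap.
  assert (0 < q ^ N) by (apply pow_lt; lra). assert (0 < q ^ S (S N)) by (apply pow_lt; lra).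
  pose proof (exp_opp_ge (x * q ^ N)).
  assert (exp (- (x * q ^ N)) <= 1) by (apply exp_opp_le_1; nra).
  assert (exp (- (x * Q ^ S (S N))) <= q ^ S (S N)).
  { eapply Rle_trans; [apply exp_opp_le_inv_id, Rmult_lt_0_compat; [lra| apply Q_pow_pos]|].
    rewrite Q_pow, Rinv_mult, Rinv_inv.
    assert (/ x <= 1) by (rewrite <- Rinv_1; apply Rinv_le_contravar; lra).
    assert (0 < / x) by (apply Rinv_0_lt_compat; lra). nra. }
  pose proof (exp_pos (- (x * Q ^ S (S N)))).
  apply Rabs_le. split; nra.
Qed.

Lemma RInt_level_sum_Qexp_dist N :
  Rabs (RInt (fun u => level_sum (Qexp u)) 0 1 - RInt (fun u => bisum level_limit (Qexp u) (S N)) 0 1)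
    <= / q * (1 + Q) * q ^ S N.
Proof.
  replace (/ q * (1 + Q) * q ^ S N) with ((1 - 0) * (/ q * (q ^ S N + Q * q ^ S N))) by ring.
  apply RInt_dist_le; [lra| intros; apply level_sum_Qexp_continuous| |].
  { intros u _. apply (continuous_comp Qexp (fun x => bisum level_limit x (S N))); [apply Qexp_continuous|].
    apply bisum_continuous; [apply exp_pos| apply level_limit_continuous]. }
  intros u Hu. destruct (Qexp_range u Hu) as [Hx1 Hx2].
  destruct (level_sum_spec (Qexp u) ltac:(lra)) as [_ Hb]. eapply Rle_trans; [apply Hb|].
  apply Rmult_le_compat_l; [apply Rlt_le, Rinv_0_lt_compat; lra|].
  set (x := Qexp u) in *. assert (0 < q ^ S N) by (apply pow_lt; lra).
  assert (q ^ S N / x <= q ^ S N).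
  { unfold Rdiv. assert (/ x <= 1) by (rewrite <- Rinv_1; apply Rinv_le_contravar; lra).
    assert (0 < / x) by (apply Rinv_0_lt_compat; lra). nra. }
  nra.
Qed.

Lemma mean_level_sum_Qexp : RInt (fun u => level_sum (Qexp u)) 0 1 = / lnQ - / pq.
Proof.
  pose proof lnQ_pos. pose proof pq_pos. pose proof Q_gt_1.
  set (I := fun N => RInt (fun u => bisum level_limit (Qexp u) (S N)) 0 1).
  assert (Hcvg1 : is_lim_seq I (RInt (fun u => level_sum (Qexp u)) 0 1)).
  { apply (is_lim_seq_of_abs_le _ (fun N => (/ q * (1 + Q) * q) * q ^ N)); [|apply is_lim_seq_scal_geom; lra].
    intros N. unfold I. rewrite Rabs_minus_sym.
    eapply Rle_trans; [apply RInt_level_sum_Qexp_dist|]. right. simpl. ring. }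
  assert (Hcvg2 : is_lim_seq I (/ lnQ - / pq)).
  { apply (is_lim_seq_ext (fun N => / lnQ * (exp_gap_ratio (q ^ N) - exp_gap_ratio (Q ^ S (S N)))
                                    - / pq * RInt (fun u => bisum exp_gap (Qexp u) (S N)) 0 1));
      [intros N; symmetry; apply RInt_bisum_level_limit_Qexp|].
    replace (/ lnQ - / pq) with (/ lnQ * (1 - 0) - / pq * 1) by ring.
    apply is_lim_seq_minus'; apply is_lim_seq_mult'; try apply is_lim_seq_const.
    - apply is_lim_seq_minus'.
      + apply (is_lim_seq_of_abs_le _ (fun N => ((1 + Q ^ 2) / pq) * q ^ N)); [|apply is_lim_seq_scal_geom; lra].
        intros N. eapply Rle_trans; [apply exp_gap_ratio_near_0, pow_lt; lra|]. right. field. lra.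
      + apply (is_lim_seq_of_abs_le _ (fun N => (2 / pq * (q * q)) * q ^ N)); [|apply is_lim_seq_scal_geom; lra].
        intros N. rewrite Rminus_0_r. eapply Rle_trans; [apply exp_gap_ratio_abs_le, Q_pow_pos|].
        right. rewrite Q_pow. simpl. field. repeat split; try apply pow_nonzero; lra.
    - apply (is_lim_seq_of_abs_le _ (fun N => (Q + q * q) * q ^ N)); [|apply is_lim_seq_scal_geom; lra].
      intros N. eapply Rle_trans; [apply RInt_bisum_exp_gap_Qexp_dist|]. right. simpl. ring. }
  pose proof (is_lim_seq_unique _ _ Hcvg1) as E. rewrite (is_lim_seq_unique _ _ Hcvg2) in E.
  injection E. intros. symmetry. assumption.
Qed.

End Asymptotics.

Theorem mainTheorem6 (q : R) (hq0 : 0 < q) (hq1 : q < 1) :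
  let p := 1 - q in
  let Q := 1 / q in
  let L := ln Q in
  exists varpi : R -> R,
    (forall x, continuous varpi x) /\
    (forall x, varpi (x + 1) = varpi x) /\
    RInt varpi 0 1 = 0 /\
    is_lim_seq
      (fun n : nat =>
         (EP p q n - INR n * (1 / L - q / p + varpi (ln (INR n) / L))) / INR n)
      0.
Proof.
  cbv zeta. change (ln (1 / q)) with (lnQ q).
  pose proof (lnQ_pos q hq0 hq1). pose proof (pq_pos q hq0 hq1).
  set (C := 1 / lnQ q - q / (1 - q)).
  exists (fun u => level_sum q (Qexp q u) - C). split; [|split; [|split]].
  - intros u. apply (continuous_minus (V := R_NormedModule) (fun u => level_sum q (Qexp q u)) (fun _ => C)).
    + apply level_sum_Qexp_continuous; auto.
    + apply continuous_const.
  - intros u. rewrite Qexp_add_1, level_sum_scale; auto. apply exp_pos.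
  - rewrite (RInt_minus (V := R_CompleteNormedModule) (fun u => level_sum q (Qexp q u)) (fun _ => C));
      [| apply (ex_RInt_continuous (V := R_CompleteNormedModule)); intros; apply level_sum_Qexp_continuous; auto
       | apply ex_RInt_const].
    rewrite RInt_const, mean_level_sum_Qexp by auto.
    change (/ lnQ q - / pq q - (1 - 0) * C = 0). unfold C, pq. field. repeat split; lra.
  - apply is_lim_seq_incr_1.
    apply (is_lim_seq_ext (fun n => EP (1 - q) q (S n) / INR (S n) - level_sum q (INR (S n))));
      [|apply EP_div_sub_level_sum_cvg; auto].
    intros n. assert (0 < INR (S n)) by (apply lt_0_INR; lia).
    rewrite Qexp_log by auto. field. lra.
Qed.
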